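(* Let $X,X_1,X_2,\dots$ be i.i.d. positive random variables with $\mathbb{E}X=1$, let $p\ge2$ be an integer and $2<\alpha\le4$, and suppose $\mathbb{P}\{X\ge x\}=O(x^{-p-\alpha})$ as $x\to\infty$. Let $2\le r\le p$ and let $\gamma=(\gamma_1,\dots,\gamma_r)$ be positive integers with $\gamma_1+\dots+\gamma_r=p$. With $S_r=X_1+\dots+X_r$, for any index $1\le k\le r$, $$\mathbb{E}\frac{X_1^{2\gamma_1}\cdots X_r^{2\gamma_r}}{\left(\frac1nS_r+1\right)^{p+1}}X_k^2=O(n^{p-r-\alpha+4})\quad(n\to\infty).$$ *)

From HB Require Import structures.
From mathcomp Require Import all_boot all_order all_algebra.
From mathcomp Require Import all_classical all_reals all_analysis.
Set Implicit Arguments. Unset Strict Implicit. Unset Printing Implicit Defensive.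
Import Order.TTheory GRing.Theory Num.Theory.
Local Open Scope classical_set_scope.
Local Open Scope ring_scope.

Definition mutually_independent d (T : measurableType d) (R : realType)
    (P : probability T R) (X : nat -> T -> R) : Prop :=
  forall (J : seq nat) (B : nat -> set R),
    uniq J -> (forall j, j \in J -> measurable (B j)) ->
    P (\big[setI/setT]_(j <- J) (X j @^-1` B j)) =
    (\prod_(j <- J) P (X j @^-1` B j))%E.

From HB Require Import structures.
From mathcomp Require Import all_boot all_order all_algebra.
From mathcomp Require Import all_classical all_reals all_analysis.
From mathcomp Require Import measurable_realfun lra zify.
Import Order.TTheory GRing.Theory Num.Theory numFieldNormedType.Exports.
Local Open Scope classical_set_scope.
Local Open Scope ring_scope.

(* Write the numerator as [\prod_i X_i ^+ a_i] with [a_i = 2 gamma_i + 2 [i = k]]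
   and let [a_i0] be the largest exponent. Lowering it by [c = a_i0 - (p + 2)]
   (when positive) leaves exponents [m_i <= p + 2 < p + alpha], and [c <= p - r].
   As [X_i0 <= S_r + n = n (S_r / n + 1)], the factor [X_i0 ^+ c] is absorbed by
   [n ^+ c] and the denominator, so the integrand is at most
   [n ^+ c \prod_i X_i ^+ m_i], whose expectation [\prod_i E X ^+ m_i] is finite
   by independence and the tail bound. This gives [O(n ^ (p - r))], which is
   enough as [alpha <= 4].
   Independence is only assumed for events, so the product formula is proved for
   countable nonnegative combinations of indicators: [X ^+ m] is dominated by the
   dyadic combination [\sum_l 2 ^+ (l m) 1{X >= 2 ^+ (l - 1)}] (level [0] being
   the whole line), whose mean the tail bound compares with a convergent
   geometric series. *)

Section extended_series_integral.
Local Open Scope ereal_scope.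
Context {R : realType}.

Lemma nneseries_term_le (u : (\bar R)^nat) l :
  (forall n, 0 <= u n) -> u l <= \sum_(n <oo) u n.
Proof.
move=> u0; apply: le_trans (nneseries_lim_ge l.+1 (fun n _ _ => u0 n)).
by rewrite big_nat_recr //= leeDr // sume_ge0.
Qed.

Lemma nneseriesMr (f : nat -> \bar R) (y : \bar R) :
  (forall i, 0 <= f i) -> 0 <= y ->
  (\sum_(l <oo) f l) * y = \sum_(l <oo) (f l * y).
Proof.
move=> f0 y0; have [yfin|] := boolP (y \is a fin_num).
  rewrite -(fineK yfin) muleC -nneseriesZl //; apply: congr_lim; apply: funext => n.
  by apply: eq_bigr => i _; rewrite muleC.
rewrite ge0_fin_numE // -leNgt leye_eq => /eqP ->.
have [[l fl0]|/forallNP f_le0] := pselect (exists l, 0 < f l).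
  have fy0 i : 0 <= f i * +oo by exact: mule_ge0.
  have sum_gt0 : 0 < \sum_(l <oo) f l.
    exact: lt_le_trans fl0 (nneseries_term_le _ l f0).
  rewrite gt0_muley //; apply/eqP; rewrite eq_le leey andbT.
  by rewrite -[X in X <= _](gt0_muley fl0); exact: nneseries_term_le.
have f_eq0 l : f l = 0 by apply/eqP; rewrite eq_le f0 andbT leNgt; exact/negP/f_le0.
by rewrite !eseries0 ?mul0e // => i _ _; rewrite f_eq0 ?mul0e.
Qed.

(* Unlike [ge0_le_integral], no measurability is needed: the integral of a
   nonnegative function is a supremum over simple minorants. *)
Lemma ge0_le_integralT d (T : measurableType d) (mu : {measure set T -> \bar R})
    (f g : T -> \bar R) :
  (forall x, 0 <= f x <= g x) -> \int[mu]_x f x <= \int[mu]_x g x.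
Proof.
move=> fg; have f0 x : 0 <= f x by have /andP[] := fg x.
have {}fg x : f x <= g x by have /andP[] := fg x.
rewrite (ge0_integralE mu (D:=setT) (f:=f)) //.
rewrite (ge0_integralE mu (D:=setT) (f:=g)); last by move=> x _; exact: le_trans (fg x).
apply: ereal_sup_le => _ [h hf <-]; exists h => //= x.
by apply: le_trans (hf x) _; rewrite /patch; case: ifPn => // _; exact: fg.
Qed.

Lemma lee_prod I (s : seq I) (P : pred I) (f g : I -> \bar R) :
  (forall i, P i -> 0 <= f i <= g i) ->
  \prod_(i <- s | P i) f i <= \prod_(i <- s | P i) g i.
Proof.
move=> fg; elim: s => [|a s IH]; rewrite ?big_nil // !big_cons.
case: ifP => // Pa; have /andP[fa0 fag] := fg a Pa.
by apply: lee_pmul => //; apply: prode_ge0 => i /fg /andP[].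
Qed.

End extended_series_integral.

Section independent_indicator_series.
Local Open Scope ereal_scope.
Context {R : realType} {d : measure_display} {T : measurableType d}.
Context (P : probability T R) (Y : nat -> {RV P >-> R}).
Hypothesis Y_indep : mutually_independent P (fun i => Y i : T -> R).
Variables (w : nat -> nat -> R) (B : nat -> nat -> set R).
Hypothesis w_ge0 : forall j l, (0 <= w j l)%R.
Hypothesis mB : forall j l, measurable (B j l).

Definition indic_series j (x : R) : \bar R := \sum_(l <oo) (w j l * \1_(B j l) x)%:E.

Definition indic_series_mean j : \bar R :=
  \sum_(l <oo) (w j l)%:E * P (Y j @^-1` B j l).

Definition cylinder (K : seq nat) (A : nat -> set R) : set T :=
  \big[setI/setT]_(j <- K) (Y j @^-1` A j).

Let indic_term_ge0 j l x : 0 <= (w j l * \1_(B j l) x)%:E.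
Proof. by rewrite lee_fin mulr_ge0 // indic_ge0. Qed.

Lemma measurable_preimage_RV j (A : set R) : measurable A -> measurable (Y j @^-1` A).
Proof. by move=> mA; rewrite -[_ @^-1` _]setTI; exact: measurable_funP. Qed.

Lemma measurable_cylinder K A : (forall j, measurable (A j)) -> measurable (cylinder K A).
Proof.
move=> mA; elim: K => [|a K IH]; first by rewrite /cylinder big_nil.
by rewrite /cylinder big_cons; apply: measurableI => //; exact: measurable_preimage_RV.
Qed.

Lemma cylinder_cons_fresh K A a C : a \notin K ->
  cylinder (a :: K) (fun j => if j == a then C else A j) = Y a @^-1` C `&` cylinder K A.
Proof.
move=> aK; rewrite /cylinder big_cons eqxx; congr (_ `&` _).
rewrite big_seq_cond [RHS]big_seq_cond; apply: eq_bigr => j /andP[jK _].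
by case: eqP => // ja; move: aK; rewrite -ja jK.
Qed.

Lemma probability_cylinder_cons_fresh K A a C : uniq K -> a \notin K ->
  measurable C -> (forall j, measurable (A j)) ->
  P (cylinder (a :: K) (fun j => if j == a then C else A j)) =
  P (Y a @^-1` C) * P (cylinder K A).
Proof.
move=> uK aK mC mA; rewrite !Y_indep //; last by move=> j; case: ifP.
  rewrite big_cons eqxx; congr (_ * _).
  rewrite big_seq_cond [RHS]big_seq_cond; apply: eq_bigr => j /andP[jK _].
  by case: eqP => // ja; move: aK; rewrite -ja jK.
by rewrite cons_uniq aK.
Qed.

Lemma indic_series_ge0 j x : 0 <= indic_series j x.
Proof. exact: nneseries_ge0. Qed.

Lemma indic_series_mean_ge0 j : 0 <= indic_series_mean j.
Proof. by apply: nneseries_ge0 => l _ _; apply: mule_ge0; rewrite ?lee_fin. Qed.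

Lemma measurable_indic_term j l :
  measurable_fun setT (fun t : T => (w j l * \1_(B j l) (Y j t))%:E).
Proof.
apply/measurable_EFinP; apply: measurable_funM; first exact: measurable_cst.
by apply: measurableT_comp; [exact: measurable_indic | exact: measurable_funP].
Qed.

Lemma measurable_prod_indic_series J :
  measurable_fun setT (fun t : T => \prod_(j <- J) indic_series j (Y j t)).
Proof.
elim: J => [|a J IH]; first by under eq_fun do rewrite big_nil; exact: measurable_cst.
under eq_fun do rewrite big_cons; apply: emeasurable_funM => //.
by apply: ge0_emeasurable_sum => [l t _ _|l _];
  [exact: indic_term_ge0 | exact: measurable_indic_term].
Qed.

Lemma prod_indic_series_ge0 J t : 0 <= \prod_(j <- J) indic_series j (Y j t).
Proof. by apply: prode_ge0 => j _; exact: indic_series_ge0. Qed.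

Lemma integral_indic_term_cylinder J K A a l : a \notin K ->
  (forall j, measurable (A j)) ->
  \int[P]_(t in cylinder K A)
     ((w a l * \1_(B a l) (Y a t))%:E * \prod_(j <- J) indic_series j (Y j t)) =
  (w a l)%:E * \int[P]_(t in cylinder (a :: K) (fun j => if j == a then B a l else A j))
     \prod_(j <- J) indic_series j (Y j t).
Proof.
move=> aK mA; have mA' j : measurable (if j == a then B a l else A j) by case: ifP.
rewrite -ge0_integralZl_EFin //; first last.
- exact: measurable_funTS (measurable_prod_indic_series J).
- by move=> t _; exact: prod_indic_series_ge0.
- exact: measurable_cylinder.
rewrite cylinder_cons_fresh // setIC integral_mkcondr; apply: eq_integral => t _.
rewrite patchE indicE EFinM -muleA.
have -> : (Y a t \in B a l) = (t \in Y a @^-1` B a l) by apply/idP/idP; rewrite !inE.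
by case: ifPn => _; rewrite ?mul1e ?mul0e ?mule0.
Qed.

Lemma integral_prod_indic_series_cylinder J K A : uniq J -> uniq K ->
  (forall j, measurable (A j)) -> (forall j, j \in J -> j \notin K) ->
  \int[P]_(t in cylinder K A) \prod_(j <- J) indic_series j (Y j t) =
  P (cylinder K A) * \prod_(j <- J) indic_series_mean j.
Proof.
elim: J K A => [|a J IH] K A uJ uK mA JK.
  under eq_integral do rewrite big_nil.
  by rewrite big_nil integral_cst ?mul1e ?mule1 //; exact: measurable_cylinder.
move: uJ; rewrite cons_uniq => /andP[aJ uJ].
have aK : a \notin K by apply: JK; rewrite mem_head.
have JaK j : j \in J -> j \notin a :: K.
  move=> jJ; rewrite in_cons negb_or JK ?inE ?jJ ?orbT // andbT.
  by apply: contraNneq aJ => <-.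
under eq_integral do rewrite big_cons nneseriesMr ?prod_indic_series_ge0 //.
rewrite integral_nneseries //; first last.
- move=> l t _; apply: mule_ge0; [exact: indic_term_ge0 | exact: prod_indic_series_ge0].
- move=> l; apply: emeasurable_funM; apply: measurable_funTS;
    [exact: measurable_indic_term | exact: measurable_prod_indic_series].
- exact: measurable_cylinder.
set Q := P (cylinder K A) * \prod_(j <- J) indic_series_mean j.
have Q0 : 0 <= Q.
  by apply: mule_ge0 => //; apply: prode_ge0 => j _; exact: indic_series_mean_ge0.
transitivity (\sum_(l <oo) ((w a l)%:E * P (Y a @^-1` B a l) * Q)).
  apply: eq_eseriesr => l _; have mA' j : measurable (if j == a then B a l else A j).
    by case: ifP.
  rewrite integral_indic_term_cylinder // IH ?cons_uniq ?aK //.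
  by rewrite probability_cylinder_cons_fresh // /Q !muleA.
rewrite -nneseriesMr //; last by move=> l; apply: mule_ge0; rewrite ?lee_fin.
by rewrite big_cons /Q muleCA.
Qed.

Lemma expectation_prod_indic_series J : uniq J ->
  \int[P]_t \prod_(j <- J) indic_series j (Y j t) = \prod_(j <- J) indic_series_mean j.
Proof.
move=> uJ.
have := @integral_prod_indic_series_cylinder J [::] (fun _ => setT) uJ erefl
  (fun _ => measurableT) (fun _ _ => erefl).
by rewrite /cylinder big_nil probability_setT mul1e.
Qed.

End independent_indicator_series.

Lemma ltr_powR {R : realType} (a : R) : 1 < a -> {homo powR a : x y / x < y}.
Proof.
move=> a1 x y xy; rewrite /powR gt_eqF ?(lt_trans ltr01 a1) //.
by rewrite ltr_expR ltr_pM2r // ln_gt0.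
Qed.

Section dyadic_majorant.
Context {R : realType}.

Definition dyadic_level (l : nat) : set R :=
  if l is l'.+1 then [set x | 2 ^+ l' <= x] else setT.

Lemma measurable_dyadic_level l : measurable (dyadic_level l).
Proof.
case: l => [|l] //=; have -> : [set x : R | 2 ^+ l <= x] = `[2 ^+ l, +oo[%classic.
  by apply/seteqP; split => x /=; rewrite in_itv /= andbT.
exact: measurable_itv.
Qed.

Lemma dyadic_bracket (x : R) : 1 <= x -> exists l, 2 ^+ l <= x < 2 ^+ l.+1.
Proof.
move=> x1; have ex : exists n, x < 2 ^+ n.
  exists (Num.bound x); apply: lt_le_trans (archi_boundP (le_trans ler01 x1)) _.
  by rewrite -natrX ler_nat ltnW // ltn_expl.
case: (ex_minnP ex) => [[|l] x_lt min_n]; first by move: x_lt; rewrite expr0 ltNge x1.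
by exists l; rewrite x_lt andbT leNgt; apply/negP => /min_n; rewrite ltnn.
Qed.

(* If [2 ^+ l <= x < 2 ^+ l.+1], then [x] lies in level [l.+1], whose weight is
   [(2 ^+ l.+1) ^+ m >= x ^+ m]. *)
Lemma exprn_le_dyadic_series m (x : R) : 0 < x ->
  ((x ^+ m)%:E <= \sum_(l <oo) (2 ^+ (l * m) * \1_(dyadic_level l) x)%:E)%E.
Proof.
move=> x0; suff [l x_le] : exists l, x ^+ m <= 2 ^+ (l * m) * \1_(dyadic_level l) x.
  apply: le_trans (nneseries_term_le _ l _); first by rewrite lee_fin.
  by move=> n; rewrite lee_fin mulr_ge0 ?exprn_ge0 ?indic_ge0.
have [x_lt1|x_ge1] := ltP x 1.
  by exists 0%N; rewrite indicE mem_set // mulr1 exprn_ile1 // ltW.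
have [l /andP[x_ge x_lt]] := dyadic_bracket x x_ge1.
exists l.+1; rewrite indicE mem_set // mulr1 exprM.
by apply: lerXn2r; rewrite ?nnegrE ?exprn_ge0 ?ltW.
Qed.

End dyadic_majorant.

Section dyadic_moment.
Context (R : realType) (d : measure_display) (T : measurableType d).
Context (P : probability T R) (X : {RV P >-> R}) (s C M : R).
Hypothesis s_ge0 : 0 <= s.
Hypothesis X_tail : forall x, M <= x ->
  (P [set t | (x <= X t)%R] <= (C * powR x (- s))%:E)%E.

Lemma measurable_ge_RV (x : R) : measurable [set t | x <= X t].
Proof.
have -> : [set t | x <= X t] = X @^-1` `[x, +oo[%classic.
  by apply/seteqP; split => t /=; rewrite in_itv /= andbT.
by rewrite -[_ @^-1` _]setTI; apply: measurable_funP => //; exact: measurable_itv.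
Qed.

(* Below [M] the trivial bound [P _ <= 1] takes over. *)
Lemma tail_bound_ge1 : exists K, 0 <= K /\ forall x, 1 <= x ->
  (P [set t | (x <= X t)%R] <= (K * powR x (- s))%:E)%E.
Proof.
exists (Num.max C (powR (Num.max M 1) s)); split; first by rewrite le_max powR_ge0 orbT.
move=> x x1; have [Mx|xM] := leP M x.
  by apply: le_trans (X_tail x Mx) _; rewrite lee_fin ler_wpM2r ?powR_ge0 // le_max lexx.
apply: le_trans (probability_le1 _ (measurable_ge_RV x)) _.
have xs_gt0 : 0 < powR x s by rewrite powR_gt0 // (lt_le_trans ltr01).
rewrite lee_fin powRN ler_pdivlMr // mul1r le_max; apply/orP; right.
apply: ge0_ler_powR; rewrite ?nnegrE ?(le_trans ler01 x1) ?le_max ?ler01 ?orbT //.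
by rewrite (ltW xM).
Qed.

Lemma dyadic_moment_fin m : m%:R < s ->
  (\sum_(l <oo) (2 ^+ (l * m))%:E * P (X @^-1` dyadic_level l))%E \is a fin_num.
Proof.
move=> ms; have [K [K0 X_tail1]] := tail_bound_ge1.
pose rho : R := 2 ^+ m * powR 2 (- s).
have rho_gt0 : 0 < rho by rewrite mulr_gt0 ?exprn_gt0 ?powR_gt0.
have rho_lt1 : rho < 1.
  rewrite /rho powRN ltr_pdivrMr ?powR_gt0 // mul1r -powR_mulrn //.
  by rewrite ltr_powR // ltr1n.
pose A := Num.max 1 (K * 2 ^+ m / rho).
have A_ge : K * 2 ^+ m / rho <= A by rewrite le_max lexx orbT.
have term_le l : ((2 ^+ (l * m))%:E * P (X @^-1` dyadic_level l) <= (A * rho ^+ l)%:E)%E.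
  case: l => [|l] /=.
    by rewrite preimage_setT probability_setT mule1 expr0 mulr1 lee_fin le_max lexx.
  apply: le_trans (lee_wpmul2l _ (X_tail1 _ _)) _; rewrite ?lee_fin ?exprn_ge0 //.
    by rewrite -natrX ler1n expn_gt0.
  have -> : powR (2 ^+ l) (- s) = powR 2 (- s) ^+ l.
    by rewrite -powR_mulrn // powRAC powR_mulrn ?powR_ge0.
  apply: le_trans (ler_wpM2r (exprn_ge0 _ (ltW rho_gt0)) A_ge).
  rewrite exprS mulrA divfK ?gt_eqF // /rho exprMn mulSn exprD mulnC exprM.
  by lra.
rewrite ge0_fin_numE; last by apply: nneseries_ge0 => l _ _; apply: mule_ge0.
apply: le_lt_trans (lee_nneseries _ (fun l _ => term_le l)) _.
  by move=> l _ _; apply: mule_ge0.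
have geo_cvg : cvgn (series (geometric A rho)).
  by apply: is_cvg_geometric_series; rewrite ger0_norm // ltW.
have -> : (\sum_(l <oo) (A * rho ^+ l)%:E)%E = (limn (series (geometric A rho)))%:E.
  by rewrite -EFin_lim //; apply: congr_lim; apply: funext => n /=; rewrite sumEFin.
exact: ltey.
Qed.
End dyadic_moment.

Lemma expectation_prod_moments_fin (R : realType) (d : measure_display)
    (T : measurableType d) (P : probability T R) (X : {RV P >-> R})
    (Xs : nat -> {RV P >-> R}) (s : R) (m : nat -> nat) (r : nat) :
  (forall i t, 0 < Xs i t) ->
  (forall i, distribution P (Xs i) = distribution P X) ->
  mutually_independent P (fun i => Xs i : T -> R) ->
  (exists C M : R, forall x, M <= x ->
     (P [set t | (x <= X t)%R] <= (C * powR x (- s))%:E)%E) ->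
  (forall j, (m j)%:R < s) ->
  (\int[P]_t (\prod_(i < r) Xs i t ^+ m i)%:E)%E \is a fin_num.
Proof.
move=> Xs_gt0 Xs_distr Xs_indep [C [M X_tail]] m_lt.
have Xs_ge0 i t : 0 <= Xs i t := ltW (Xs_gt0 i t).
pose w j l : R := 2 ^+ (l * m j).
pose B (j l : nat) : set R := dyadic_level l.
have w_ge0 j l : 0 <= w j l by rewrite exprn_ge0.
have mB j l : measurable (B j l) by exact: measurable_dyadic_level.
have s_ge0 : 0 <= s by apply: le_trans (ltW (m_lt 0%N)).
have mean_fin j : indic_series_mean P Xs w B j \is a fin_num.
  have -> : indic_series_mean P Xs w B j =
      (\sum_(l <oo) (2 ^+ (l * m j))%:E * P (X @^-1` dyadic_level l))%E.
    apply: eq_eseriesr => l _; congr (_ * _)%E.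
    exact: (congr1 (fun mu => mu (dyadic_level l)) (Xs_distr j)).
  exact: dyadic_moment_fin s_ge0 X_tail _ (m_lt j).
have prod_lt : (\prod_(j <- iota 0 r) indic_series_mean P Xs w B j < +oo)%E.
  rewrite -ge0_fin_numE ?prode_fin_num // prode_ge0 // => j _.
  exact: indic_series_mean_ge0.
rewrite ge0_fin_numE; last first.
  by apply: integral_ge0 => t _; rewrite lee_fin prodr_ge0 // => i _; rewrite exprn_ge0.
apply: le_lt_trans prod_lt.
rewrite -(expectation_prod_indic_series _ _ Xs_indep _ _ w_ge0 mB _ (iota_uniq 0 r)).
have -> : iota 0 r = index_iota 0 r by rewrite /index_iota subn0.
apply: ge0_le_integralT => t; rewrite -prodEFin big_mkord.
rewrite prode_ge0 => [/=|i _]; last by rewrite lee_fin exprn_ge0.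
apply: lee_prod => i _; rewrite lee_fin exprn_ge0 //=; exact: exprn_le_dyadic_series.
Qed.

(* Lower the largest exponent [a i0] to [p + 2]; every other [a i] is at most
   [p + 1], since two distinct [gamma]s add up to at most [p]. *)
Lemma exponent_split {r p : nat} {gamma : 'I_r -> nat} (k : 'I_r) :
  (2 <= r)%N -> (forall i, 0 < gamma i)%N -> (\sum_(i < r) gamma i)%N = p ->
  exists (i0 : 'I_r) (c : nat) (m : nat -> nat),
    [/\ (c <= p - r)%N, (forall j, m j <= p + 2)%N &
     forall i : 'I_r, (2 * gamma i + (if i == k then 2 else 0))%N =
                      (m i + (if i == i0 then c else 0))%N].
Proof.
move=> r_ge2 gamma_gt0 gamma_sum.
pose a i := (2 * gamma i + (if i == k then 2 else 0))%N.
have a_le i : (a i <= 2 * gamma i + 2)%N by rewrite /a; case: (i == k); lia.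
have gamma_pair i j : i != j -> (gamma i + gamma j <= p)%N.
  by move=> ij; rewrite -gamma_sum (bigD1 i) //= (bigD1 j) 1?eq_sym //=; lia.
have [i0 _ a_max] := @arg_maxnP _ k xpredT a erefl.
have gamma_i0 : (gamma i0 + (r - 1) <= p)%N.
  rewrite -gamma_sum (bigD1 i0) //= leq_add2l.
  have : (\sum_(i < r | i != i0) 1 <= \sum_(i < r | i != i0) gamma i)%N.
    by apply: leq_sum => i _; exact: gamma_gt0.
  by rewrite sum1_card cardC1 card_ord subn1.
pose c := (a i0 - (p + 2))%N.
pose mI i := if i == i0 then (a i - c)%N else a i.
have mI_le i : (mI i <= p + 2)%N.
  rewrite /mI; case: eqP => [->|/eqP i_neq]; first lia.
  have := a_max i isT; have := a_le i; have := a_le i0.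
  by have := gamma_pair i i0 i_neq; lia.
exists i0, c, (fun j => mI (insubd i0 j)); split => [|j|i]; rewrite ?valKd //.
- by have := a_le i0; lia.
- by rewrite -/(a i) /mI; case: eqP => [->|_]; lia.
Qed.

Lemma prod_exprD_at (R : comPzSemiRingType) r (x : 'I_r -> R) (e : 'I_r -> nat) i0 c :
  \prod_(i < r) x i ^+ (e i + (if i == i0 then c else 0)) =
  x i0 ^+ c * \prod_(i < r) x i ^+ e i.
Proof.
under eq_bigr do rewrite exprD; rewrite big_split /= mulrC; congr (_ * _).
by rewrite (bigD1 i0) //= eqxx big1 ?mulr1 // => i /negbTE ->.
Qed.

(* [x i0 <= \sum_i x i + n = n * (\sum_i x i / n + 1)]. *)
Lemma exprn_le_sum_div_add1 (R : realFieldType) r (x : 'I_r -> R) (i0 : 'I_r)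
    (n : R) (c q : nat) :
  0 < n -> (forall i, 0 <= x i) -> (c <= q)%N ->
  x i0 ^+ c <= n ^+ c * ((\sum_(i < r) x i) / n + 1) ^+ q.
Proof.
move=> n_gt0 x_ge0 cq; set D := _ / n + 1.
have D_ge1 : 1 <= D by rewrite lerDr divr_ge0 ?sumr_ge0 ?(ltW n_gt0).
have x_le : x i0 <= n * D.
  rewrite mulrDr mulr1 mulrC divfK ?gt_eqF // (bigD1 i0) //= -addrA lerDl.
  by rewrite addr_ge0 ?sumr_ge0 ?ltW.
have nD_ge0 : 0 <= n * D by rewrite mulr_ge0 ?(ltW n_gt0) ?(le_trans ler01 D_ge1).
apply: le_trans (lerXn2r c _ _ x_le) _; rewrite ?nnegrE //.
by rewrite exprMn ler_wpM2l ?exprn_ge0 ?(ltW n_gt0) // ler_weXn2l.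
Qed.

Lemma prod_div_sum_add1_bounds (R : realFieldType) r (x : 'I_r -> R)
    (e m : 'I_r -> nat) (k i0 : 'I_r) (n : R) (b c q : nat) :
  0 < n -> (forall i, 0 <= x i) -> (c <= q)%N ->
  (forall i, e i + (if i == k then b else 0) = m i + (if i == i0 then c else 0))%N ->
  0 <= (\prod_(i < r) x i ^+ e i) * x k ^+ b / ((\sum_(i < r) x i) / n + 1) ^+ q
    <= n ^+ c * \prod_(i < r) x i ^+ m i.
Proof.
move=> n_gt0 x_ge0 cq e_split.
have D_gt0 : 0 < (\sum_(i < r) x i) / n + 1.
  by rewrite ltr_wpDl ?divr_ge0 ?sumr_ge0 ?(ltW n_gt0).
have prod_ge0 (f : 'I_r -> nat) : 0 <= \prod_(i < r) x i ^+ f i.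
  by apply: prodr_ge0 => i _; exact: exprn_ge0.
rewrite [_ * x k ^+ b]mulrC -prod_exprD_at; under eq_bigr do rewrite e_split.
rewrite prod_exprD_at divr_ge0 ?mulr_ge0 ?exprn_ge0 ?(ltW D_gt0) //=.
rewrite ler_pdivrMr ?exprn_gt0 // mulrAC ler_wpM2r //.
exact: exprn_le_sum_div_add1.
Qed.

Lemma exprn_le_powR (R : realType) (x y : R) (c : nat) :
  1 <= x -> c%:R <= y -> x ^+ c <= powR x y.
Proof. by move=> x_ge1 cy; rewrite -powR_mulrn ?(le_trans ler01 x_ge1) // ler_powR. Qed.

Theorem lemma10 (R : realType) (d : measure_display) (T : measurableType d)
  (P : probability T R) (X : {RV P >-> R}) (Xs : nat -> {RV P >-> R})
  (p : nat) (alpha : R) (r : nat) (gamma : 'I_r -> nat) (k : 'I_r) :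
  (forall t, 0 < X t) ->
  (forall i t, 0 < Xs i t) ->
  (forall i, distribution P (Xs i) = distribution P X) ->
  mutually_independent P (fun i => Xs i : T -> R) ->
  ('E_P[X] = 1)%E ->
  (2 <= p)%N -> 2 < alpha <= 4 ->
  (exists C M : R, forall x : R, M <= x ->
     (P [set t | (x <= X t)%R] <= (C * powR x (- (p%:R + alpha)))%:E)%E) ->
  (2 <= r)%N -> (r <= p)%N ->
  (forall i, (0 < gamma i)%N) -> (\sum_(i < r) gamma i)%N = p ->
  exists (C : R) (N : nat), forall n : nat, (N <= n)%N ->
    ('E_P[fun t =>
        ((\prod_(i < r) Xs i t ^+ (2 * gamma i)) * Xs k t ^+ 2
        / ((\sum_(i < r) Xs i t) / n%:R + 1) ^+ p.+1)%R]
     <= (C * powR n%:R (p%:R - r%:R - alpha + 4))%:E)%E.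
Proof.
move=> _ Xs_gt0 Xs_distr Xs_indep _ _ /andP[alpha_gt2 alpha_le4] X_tail r_ge2 r_le_p
  gamma_gt0 gamma_sum.
have [i0 [c [m [c_le m_le a_split]]]] := exponent_split k r_ge2 gamma_gt0 gamma_sum.
have m_lt j : (m j)%:R < p%:R + alpha.
  by apply: le_lt_trans (_ : (p + 2)%:R < _); rewrite ?ler_nat ?natrD ?ltrD2l.
have Xs_ge0 i t : 0 <= Xs i t := ltW (Xs_gt0 i t).
have prod_ge0 t : 0 <= \prod_(i < r) Xs i t ^+ m i.
  by apply: prodr_ge0 => i _; exact: exprn_ge0.
set I := (\int[P]_t (\prod_(i < r) Xs i t ^+ m i)%:E)%E.
have I_fin : I \is a fin_num.
  exact: expectation_prod_moments_fin Xs_gt0 Xs_distr Xs_indep X_tail m_lt.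
have I_ge0 : (0 <= I)%E by apply: integral_ge0 => t _; rewrite lee_fin.
exists (fine I), 1%N => n n_ge1; rewrite unlock.
apply: (@le_trans _ _ ((n%:R ^+ c)%:E * I)%E).
  have mprod : measurable_fun setT (fun t => (\prod_(i < r) Xs i t ^+ m i)%:E).
    apply/measurable_EFinP; apply: measurable_prod => i _.
    exact/measurable_funX/measurable_funP.
  rewrite /I -ge0_integralZl_EFin ?exprn_ge0 //; last by move=> t _; rewrite lee_fin.
  apply: ge0_le_integralT => t; rewrite -EFinM !lee_fin.
  by apply: prod_div_sum_add1_bounds a_split; rewrite ?ltr0n //; lia.
rewrite -(fineK I_fin) -EFinM lee_fin mulrC ler_wpM2l ?fine_ge0 //.
rewrite exprn_le_powR ?ler1n //.
have : c%:R <= p%:R - r%:R :> R by rewrite -natrB // ler_nat.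
lra.
Qed.
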